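(* Consider the setting below and suppose $\|\mathbf{y}\|\le D$ for all $\mathbf{y}\in\mathcal{C}$. Let $\mathbf{y}^*$ be a maximizer of $G$ over $\mathcal{C}$. Then for $t=0,\dots,T$ and any $\beta_t>0$, $$\mathbb{E}[G(\mathbf{y}_{t+1})]\ge \mathbb{E}[G(\mathbf{y}_t)]+\frac1T\mathbb{E}[G(\mathbf{y}^* )-G(\mathbf{y}_t)]-\frac{f_{\max}rD^2}{2T^2}-\frac{1}{2T}\Big(4\beta_tD^2-\frac{\mathbb{E}[\|\nabla G(\mathbf{y}_t)-\mathbf{d}_t\|^2]}{\beta_t}\Big),$$ where $r$ is the rank of the matroid and $f_{\max}=\max_{i\in V}f(\{i\})$.
   Context: Ground set $V=\{1,\dots,n\}$, sets identified with indicator vectors in $\{0,1\}^n$. $z\sim P$ is random; each $f_z:\{0,1\}^n\to\mathbb{R}_+$ is monotone submodular and $f(\mathbf{x})=\mathbb{E}_{z\sim P}[f_z(\mathbf{x})]$. A matroid $(V,\mathcal{I})$ of rank $r$ is given and $\mathcal{C}$ is its matroid polytope (convex hull of indicator vectors of independent sets). $G_z(\mathbf{y})=\mathbb{E}_{\mathbf{x}\sim\mathbf{y}}[f_z(\mathbf{x})]$, where $\mathbf{x}\sim\mathbf{y}$ has independent Bernoulli$(y_i)$ coordinates, is the multilinear relaxation of $f_z$, and $G(\mathbf{y})=\mathbb{E}_z[G_z(\mathbf{y})]$. Stochastic Continuous Greedy: with step sizes $\rho_t>0$, set $\mathbf{d}_0=\mathbf{y}_0=\mathbf{0}$; for $t=1,\dots,T$,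 draw $z_t\sim P$, set $\mathbf{d}_t=(1-\rho_t)\mathbf{d}_{t-1}+\rho_t\nabla G_{z_t}(\mathbf{y}_t)$, choose $\mathbf{v}_t\in\arg\max_{\mathbf{v}\in\mathcal{C}}\mathbf{d}_t^\top\mathbf{v}$, and set $\mathbf{y}_{t+1}=\mathbf{y}_t+\frac1T\mathbf{v}_t$. *)

From HB Require Import structures.
From mathcomp Require Import all_boot all_order all_algebra.
From mathcomp Require Import all_classical all_reals all_analysis.
Set Implicit Arguments. Unset Strict Implicit. Unset Printing Implicit Defensive.
Import Order.TTheory GRing.Theory Num.Theory.
Local Open Scope ring_scope.

Section Defs.
Variables (R : realType) (n : nat).

Definition dotv (a b : 'I_n -> R) : R := \sum_(i < n) a i * b i.
Definition normv (a : 'I_n -> R) : R := Num.sqrt (\sum_(i < n) a i ^+ 2).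
Definition indic (S : {set 'I_n}) : 'I_n -> R := fun i => if i \in S then 1 else 0.

Definition is_matroid (I : {set {set 'I_n}}) : Prop :=
  [/\ (finset.set0 : {set 'I_n}) \in I,
      (forall A B : {set 'I_n}, A \in I -> B \subset A -> B \in I) &
      (forall A B : {set 'I_n}, A \in I -> B \in I -> (#|A| < #|B|)%N ->
          exists2 x, x \in B :\: A & x |: A \in I)].

Definition mrank (I : {set {set 'I_n}}) : nat := (\max_(S in I) #|S|)%N.

Definition matroid_polytope (I : {set {set 'I_n}}) : set ('I_n -> R) :=
  fun y => exists lam : {set 'I_n} -> R,
     [/\ (forall S : {set 'I_n}, 0 <= lam S), (forall S : {set 'I_n}, S \notin I -> lam S = 0),
         \sum_(S in I) lam S = 1 &
         y = fun i => \sum_(S in I) lam S * indic S i].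

Definition monotone_sf (f : {set 'I_n} -> R) : Prop :=
  forall A B : {set 'I_n}, A \subset B -> f A <= f B.
Definition submodular (f : {set 'I_n} -> R) : Prop :=
  forall A B : {set 'I_n}, f (A :|: B) + f (A :&: B) <= f A + f B.
Definition nonneg_sf (f : {set 'I_n} -> R) : Prop := forall A, 0 <= f A.

(* multilinear relaxation: E_{x ~ y} f(x), x with independent Bernoulli(y_i) coords *)
Definition multilinear (f : {set 'I_n} -> R) (y : 'I_n -> R) : R :=
  \sum_(S : {set 'I_n}) f S * (\prod_(i in S) y i) * (\prod_(i in ~: S) (1 - y i)).

Definition gradv (F : ('I_n -> R) -> R) (y : 'I_n -> R) : 'I_n -> R :=
  fun i => derive1 (fun s : R => F (fun j => y j + (if j == i then s else 0))) 0.

End Defs.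

Section Stoch.
Variables (R : realType) (n : nat) (dz : measure_display) (Z : measurableType dz)
  (P : probability Z R).
Local Open Scope ereal_scope.

Definition fexp (f : Z -> {set 'I_n} -> R) (S : {set 'I_n}) : R :=
  fine (\int[P]_z (f z S)%:E).
Definition Gexp (f : Z -> {set 'I_n} -> R) (y : 'I_n -> R) : R :=
  fine (\int[P]_z (multilinear (f z) y)%:E).
End Stoch.

Definition mutually_indep (R : realType) (d : measure_display) (Om : measurableType d)
  (Pr : probability Om R) (dz : measure_display) (Z : measurableType dz)
  (z : nat -> Om -> Z) : Prop :=
  forall (s : seq nat) (A : nat -> set Z), uniq s -> (forall i, measurable (A i)) ->
    Pr (\big[setI/setT]_(i <- s) (z i @^-1` A i))%classic = (\prod_(i <- s) Pr (z i @^-1` A i)%classic)%E.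

(* Stochastic Continuous Greedy iterates, with y_1 = 0 and d_0 = 0 *)
Fixpoint scg_y (R : realType) (n : nat) (Om : Type) (T : nat)
  (v : nat -> Om -> 'I_n -> R) (t : nat) (w : Om) : 'I_n -> R :=
  match t with
  | 0 => fun _ => 0
  | 1 => fun _ => 0
  | (t'.+1) as t1 => fun i => scg_y T v t' w i + v t' w i / T%:R
  end.

Fixpoint scg_d (R : realType) (n : nat) (dz : measure_display) (Z : measurableType dz)
  (Om : Type) (f : Z -> {set 'I_n} -> R) (z : nat -> Om -> Z) (rho : nat -> R)
  (y : nat -> Om -> 'I_n -> R) (t : nat) (w : Om) : 'I_n -> R :=
  match t with
  | 0 => fun _ => 0
  | t'.+1 => fun i => (1 - rho t'.+1) * scg_d f z rho y t' w i
                      + rho t'.+1 * gradv (multilinear (f (z t'.+1 w))) (y t'.+1 w) i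
  end.

From Pilot Require Import Defs.
From HB Require Import structures.
From mathcomp Require Import all_boot all_order all_algebra.
From mathcomp Require Import all_classical all_reals all_analysis.
From mathcomp Require Import measurable_realfun ring lra.
Import Order.TTheory GRing.Theory Num.Theory.
Local Open Scope ring_scope.
Set Implicit Arguments. Unset Strict Implicit. Unset Printing Implicit Defensive.

(** With F := E[f_z], G is the multilinear extension of F: its partial derivatives
    are the multilinear extensions of the marginals F(S + j) - F(S - j), and its
    second derivatives those of the second marginals, which lie in [-F {m}, 0] for
    monotone submodular F.  Moving from y to y + w (w >= 0) one coordinate at a time
    therefore gives concavity along nonnegative directions,
    G(u) - G(y) <= <grad G(y), u> (applied to u \/ y), and the smoothness bound
    G(y + w) >= G(y) + <grad G(y), w> - f_max (sum w)^2 / 2.  For w = v_t / T,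
    (sum v_t)^2 <= r D^2 since every independent set has |S| <= r and
    |S| = |1_S|^2 <= D^2.  The oracle inequality <d_t, y*> <= <d_t, v_t> and Young's
    inequality for <grad G(y_t) - d_t, v_t - y*> then give the bound on every sample
    path, and integrating it gives the statement. *)

Section Multilinear.
Variables (R : realType) (n : nat).
Local Notation ML := (@multilinear R n).
Implicit Types (F H : {set 'I_n} -> R) (y u w : 'I_n -> R) (i j : 'I_n) (S : {set 'I_n}).

Definition marginal j F : {set 'I_n} -> R := fun S => F (j |: S) - F (S :\ j).

Lemma sum_set_pivot (g : {set 'I_n} -> R) j :
  \sum_(S : {set 'I_n}) g S = \sum_(S : {set 'I_n} | j \notin S) (g (j |: S) + g S).
Proof.
rewrite big_split /= [LHS](bigID (fun S : {set 'I_n} => j \in S)) /=; congr (_ + _).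
pose flip S := if j \in S then S :\ j else j |: S.
have flipK : involutive flip.
  move=> S; rewrite /flip; case: (boolP (j \in S)) => jS.
    by rewrite finset.setD11 /= finset.setD1K.
  by rewrite finset.setU11 /= finset.setU1K.
rewrite (reindex_inj (can_inj flipK)); apply: eq_big => S; rewrite /flip.
  by case: (boolP (j \in S)) => jS; rewrite ?finset.setD11 ?finset.setU11 ?jS.
by case: (boolP (j \in S)) => jS; rewrite ?finset.setD11.
Qed.

Lemma multilinear_pivot F y j : ML F y =
  \sum_(S : {set 'I_n} | j \notin S) (y j * F (j |: S) + (1 - y j) * F S)
                        * \prod_(i in S) y i * \prod_(i in ~: (j |: S)) (1 - y i).
Proof.
rewrite /multilinear (sum_set_pivot _ j); apply: eq_bigr => S jS.
rewrite big_setU1 //= [\prod_(i in ~: S) _](bigD1 j) ?inE //=.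
have -> : \prod_(i in ~: S | i != j) (1 - y i) = \prod_(i in ~: (j |: S)) (1 - y i).
  by apply: eq_bigl => i; rewrite !inE negb_or andbC.
ring.
Qed.

Lemma multilinear_shift F y j s :
  ML F (fun i => y i + (if i == j then s else 0)) = ML F y + s * ML (marginal j F) y.
Proof.
rewrite !(multilinear_pivot _ _ j) mulr_sumr -big_split; apply: eq_bigr => S jS /=.
rewrite /marginal.
have -> : \prod_(i in S) (y i + (if i == j then s else 0)) = \prod_(i in S) y i.
  by apply: eq_bigr => i iS; rewrite ifN ?addr0 //; apply: contraNneq jS => <-.
have -> : \prod_(i in ~: (j |: S)) (1 - (y i + (if i == j then s else 0))) =
          \prod_(i in ~: (j |: S)) (1 - y i).
  by apply: eq_bigr => i; rewrite !inE negb_or => /andP[ij _]; rewrite ifN ?addr0.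
have -> : S :\ j = S by apply/finset.setDidPl; rewrite disjoint_sym disjoints1.
by rewrite finset.setUA finset.setUid finset.setU1K // eqxx; ring.
Qed.

Lemma gradv_multilinear F y i : gradv (ML F) y i = ML (marginal i F) y.
Proof.
rewrite /gradv (_ : (fun s => _) = fun s => ML F y + s * ML (marginal i F) y).
  rewrite derive1E; apply: derive_val; apply: is_derive_eq.
  by rewrite add0r mul1r scaler0 add0r; apply: mulr1.
by apply/funext => s; rewrite multilinear_shift.
Qed.

Lemma multilinear_cst c y : ML (fun _ => c) y = c.
Proof.
have prod_split S : \prod_i (if i \in S then y i else 1 - y i) =
    \prod_(i in S) y i * \prod_(i in ~: S) (1 - y i).
  rewrite (bigID (mem S)) /=; congr (_ * _); first by apply: eq_bigr => i ->.
  by apply: eq_big => i; rewrite ?inE // => /negbTE ->.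
transitivity (c * \prod_i (y i + (1 - y i))).
  rewrite bigA_distr mulr_sumr; apply: eq_big => // S _.
  by rewrite prod_split mulrA.
by rewrite big1 ?mulr1 // => i _; rewrite addrC subrK.
Qed.

Lemma ler_multilinear F H y : (forall i, 0 <= y i <= 1) -> (forall S, F S <= H S) ->
  ML F y <= ML H y.
Proof.
move=> y01 FH; apply: ler_sum => S _; rewrite -!mulrA ler_wpM2r //.
rewrite mulr_ge0 // prodr_ge0 // => i _; case/andP: (y01 i) => //.
by rewrite subr_ge0.
Qed.

Lemma multilinear_ge0 F y : (forall i, 0 <= y i <= 1) -> nonneg_sf F -> 0 <= ML F y.
Proof. by move=> y01 F0; rewrite -(multilinear_cst 0 y); apply: ler_multilinear. Qed.

Definition add_prefix y w (m : nat) : 'I_n -> R :=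
  fun i => y i + (if (i < m)%N then w i else 0).

Lemma add_prefix0 y w : add_prefix y w 0 = y.
Proof. by apply/funext => i; rewrite /add_prefix addr0. Qed.

Lemma add_prefix_n y w : add_prefix y w n = (fun i => y i + w i).
Proof. by apply/funext => i; rewrite /add_prefix ltn_ord. Qed.

Lemma add_prefixS y w (m : 'I_n) :
  add_prefix y w m.+1 = (fun i => add_prefix y w m i + (if i == m then w m else 0)).
Proof.
apply/funext => i; rewrite /add_prefix ltnS leq_eqVlt val_eqE /=.
by case: (eqVneq i m) => [->|ne]; rewrite ?eqxx ?ltnn ?(negbTE ne) /= addr0.
Qed.

Lemma add_prefix_in01 y w m : (forall i, 0 <= y i) -> (forall i, 0 <= w i) ->
  (forall i, y i + w i <= 1) -> forall i, 0 <= add_prefix y w m i <= 1.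
Proof.
move=> y0 w0 yw1 i; rewrite /add_prefix.
case: ifP => _; first by rewrite addr_ge0 ?yw1.
by rewrite addr0 y0 (le_trans _ (yw1 i)) // lerDl.
Qed.

Lemma multilinear_telescope_prefix F y w m : (m <= n)%N ->
  ML F (add_prefix y w m) =
  ML F y + \sum_(j : 'I_n | (j < m)%N) w j * ML (marginal j F) (add_prefix y w j).
Proof.
elim: m => [_|m IH hm]; first by rewrite add_prefix0 big_pred0 ?addr0.
rewrite (add_prefixS y w (Ordinal hm)) multilinear_shift [in LHS](IH (ltnW hm)) -addrA.
congr (_ + _); rewrite [RHS](bigD1 (Ordinal hm)) ?ltnSn // addrC; congr (_ + _).
by apply: eq_bigl => j; rewrite ltnS andbC -val_eqE ltn_neqAle.
Qed.

Lemma multilinear_telescope F y w : ML F (fun i => y i + w i) =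
  ML F y + \sum_j w j * ML (marginal j F) (add_prefix y w j).
Proof.
rewrite -add_prefix_n multilinear_telescope_prefix //; congr (_ + _).
by apply: eq_bigl => j; rewrite ltn_ord.
Qed.

Lemma multilinear_add_lb H y w (a : 'I_n -> R) :
  (forall i, 0 <= y i) -> (forall i, 0 <= w i) -> (forall i, y i + w i <= 1) ->
  (forall j S, a j <= marginal j H S) ->
  ML H y + \sum_j w j * a j <= ML H (fun i => y i + w i).
Proof.
move=> y0 w0 yw1 Ha; rewrite multilinear_telescope lerD2l; apply: ler_sum => j _.
rewrite ler_wpM2l // -(multilinear_cst (a j) (add_prefix y w j)).
by apply: ler_multilinear; [exact: add_prefix_in01 | exact: Ha].
Qed.

Lemma multilinear_add_ub H y w (b : 'I_n -> R) :
  (forall i, 0 <= y i) -> (forall i, 0 <= w i) -> (forall i, y i + w i <= 1) ->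
  (forall j S, marginal j H S <= b j) ->
  ML H (fun i => y i + w i) <= ML H y + \sum_j w j * b j.
Proof.
move=> y0 w0 yw1 Hb; rewrite multilinear_telescope lerD2l; apply: ler_sum => j _.
rewrite ler_wpM2l // -(multilinear_cst (b j) (add_prefix y w j)).
by apply: ler_multilinear; [exact: add_prefix_in01 | exact: Hb].
Qed.

Lemma marginal_ge0 F j S : monotone_sf F -> 0 <= marginal j F S.
Proof.
move=> Fmono; rewrite subr_ge0; apply: Fmono.
by apply/fintype.subsetP => x; rewrite !inE => /andP[_ ->]; rewrite orbT.
Qed.

Lemma multilinear_homo F y u : monotone_sf F ->
  (forall i, 0 <= y i) -> (forall i, y i <= u i) -> (forall i, u i <= 1) ->
  ML F y <= ML F u.
Proof.
move=> Fmono y0 yu u1.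
have := @multilinear_add_lb F y (fun i => u i - y i) (fun _ => 0).
rewrite big1 => [|j _]; last by rewrite mulr0.
have -> : (fun i => y i + (u i - y i)) = u by apply/funext => i; rewrite addrC subrK.
rewrite addr0; apply=> // [i|i|j S]; first by rewrite subr_ge0.
  by rewrite addrC subrK.
exact: marginal_ge0.
Qed.

End Multilinear.

Lemma sum_prefix_mul_le (R : numDomainType) n (w : 'I_n -> R) : (forall i, 0 <= w i) ->
  2 * \sum_m w m * \sum_(j : 'I_n | (j < m)%N) w j <= (\sum_m w m) ^+ 2.
Proof.
move=> w0; set X := \sum_m _.
have XE : X = \sum_m w m * \sum_(j : 'I_n | (m < j)%N) w j.
  rewrite /X; under eq_bigr do rewrite mulr_sumr big_mkcond.
  under [RHS]eq_bigr do rewrite mulr_sumr big_mkcond.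
  rewrite exchange_big; apply: eq_bigr => m _; apply: eq_bigr => j _.
  by case: ifP; rewrite // mulrC.
rewrite mulr_natl mulr2n {2}XE expr2 mulr_suml -big_split /=; apply: ler_sum => m _.
rewrite -mulrDr ler_wpM2l // [leRHS](bigID (fun j : 'I_n => (j < m)%N)) lerD2l.
rewrite [leRHS](bigID (fun j : 'I_n => (m < j)%N)) /= -[leLHS]addr0 lerD ?sumr_ge0 //.
by rewrite le_eqVlt; apply/orP; left; apply/eqP/eq_bigl => j; case: ltngtP.
Qed.

Section Submodular.
Variables (R : realType) (n : nat).
Local Notation ML := (@multilinear R n).
Implicit Types (F : {set 'I_n} -> R) (y u w : 'I_n -> R) (i j m : 'I_n) (S : {set 'I_n}).

Lemma marginal2_diag F m S : marginal m (marginal m F) S = 0.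
Proof.
rewrite /marginal finset.setUA finset.setUid.
have -> : (m |: S) :\ m = S :\ m by apply/setP => x; rewrite !inE; case: eqVneq.
have -> : m |: (S :\ m) = m |: S by apply/setP => x; rewrite !inE; case: eqVneq.
have -> : S :\ m :\ m = S :\ m by apply/setP => x; rewrite !inE; case: eqVneq.
by rewrite subrr.
Qed.

Lemma marginal2E F i m S : i != m -> let A := S :\ i :\ m in
  marginal i (marginal m F) S = F (m |: (i |: A)) - F (i |: A) - (F (m |: A) - F A).
Proof.
move=> im A; rewrite /marginal.
have -> : m |: (i |: S) = m |: (i |: A).
  by apply/setP => x; rewrite !inE; case: (eqVneq x i); case: (eqVneq x m).
have -> : (i |: S) :\ m = i |: A.
  by apply/setP => x; rewrite !inE; case: (eqVneq x i) => [->|]; rewrite ?im //; case: eqVneq.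
have -> : m |: (S :\ i) = m |: A.
  by apply/setP => x; rewrite !inE; case: (eqVneq x m).
by [].
Qed.

Lemma marginal2_le0 F i m S : submodular F -> marginal i (marginal m F) S <= 0.
Proof.
move=> Fsub; have [->|im] := eqVneq i m; first by rewrite marginal2_diag.
rewrite marginal2E //=; set A := S :\ i :\ m.
have iA : i \notin A by rewrite !inE eqxx andbF.
have mA : m \notin A by rewrite !inE eqxx.
clearbody A; have := Fsub (i |: A) (m |: A).
have -> : (i |: A) :|: (m |: A) = m |: (i |: A).
  by apply/setP => x; rewrite !inE orbCA -!orbA orbb.
have -> : (i |: A) :&: (m |: A) = A.
  apply/setP => x; rewrite !inE; case: (eqVneq x i) => [->|_].
    by rewrite (negbTE iA) (negbTE im).
  by case: (eqVneq x m) => [->|_]; rewrite ?(negbTE mA) ?andbF ?andbb.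
lra.
Qed.

Lemma marginal2_ge F i m S : monotone_sf F -> submodular F -> nonneg_sf F ->
  - F [set m] <= marginal i (marginal m F) S.
Proof.
move=> Fmono Fsub F0; have [->|im] := eqVneq i m.
  by rewrite marginal2_diag oppr_le0.
rewrite marginal2E //=; set A := S :\ i :\ m.
have mA : m \notin A by rewrite !inE eqxx.
clearbody A; have : F (i |: A) <= F (m |: (i |: A)) by apply/Fmono; rewrite finset.subsetUr.
have := Fsub A [set m]; rewrite finset.setUC.
have -> : A :&: [set m] = finset.set0.
  by apply/setP => x; rewrite !inE; case: (eqVneq x m) => [->|]; rewrite ?(negbTE mA) ?andbF.
have := F0 finset.set0; lra.
Qed.

Lemma multilinear_concave_dir F y u : monotone_sf F -> submodular F ->
  (forall i, 0 <= y i <= 1) -> (forall i, 0 <= u i <= 1) ->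
  ML F u - ML F y <= \sum_m u m * ML (marginal m F) y.
Proof.
move=> Fmono Fsub y01 u01.
have y0 i : 0 <= y i by case/andP: (y01 i).
pose w i := Num.max (u i) (y i) - y i.
have w0 i : 0 <= w i by rewrite subr_ge0 le_max lexx orbT.
have yw1 i : y i + w i <= 1.
  by rewrite addrC subrK ge_max; case/andP: (y01 i) => _ ->; case/andP: (u01 i) => _ ->.
have Fu_le : ML F u <= ML F (fun i => y i + w i).
  apply: multilinear_homo => // i; first by case/andP: (u01 i).
  by rewrite addrC subrK le_max lexx.
have marg_le m : ML (marginal m F) (add_prefix y w m) <= ML (marginal m F) y.
  have := @multilinear_add_ub _ _ (marginal m F) y
    (fun i => if (i < m)%N then w i else 0) (fun _ => 0) y0.
  rewrite big1 ?addr0 => [|j _]; last by rewrite mulr0.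
  apply=> [i|i|j S]; last exact: marginal2_le0.
    by case: ifP.
  by case: ifP => // _; rewrite addr0; case/andP: (y01 i).
apply: le_trans (lerB Fu_le (lexx _)) _.
rewrite multilinear_telescope addrAC subrr add0r; apply: ler_sum => m _.
apply: le_trans (ler_wpM2l (w0 m) (marg_le m)) _; apply: ler_wpM2r.
  by apply: multilinear_ge0 => // S; apply: marginal_ge0.
rewrite lerBlDr ge_max lerDl y0 lerDr; by case/andP: (u01 m).
Qed.

Lemma multilinear_smooth F y w (c : R) :
  monotone_sf F -> submodular F -> nonneg_sf F -> 0 <= c -> (forall m, F [set m] <= c) ->
  (forall i, 0 <= y i) -> (forall i, 0 <= w i) -> (forall i, y i + w i <= 1) ->
  ML F y + \sum_m w m * ML (marginal m F) y - c / 2 * (\sum_m w m) ^+ 2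
    <= ML F (fun i => y i + w i).
Proof.
move=> Fmono Fsub F0 c0 Fc y0 w0 yw1.
pose pre (m : 'I_n) := \sum_(j : 'I_n | (j < m)%N) w j.
have marg_ge m : ML (marginal m F) y - c * pre m <= ML (marginal m F) (add_prefix y w m).
  have := @multilinear_add_lb _ _ (marginal m F) y
    (fun i => if (i < m)%N then w i else 0) (fun _ => - c) y0.
  rewrite -big_distrl -big_mkcond /= mulrN mulrC; apply=> [i|i|j S].
  - by case: ifP.
  - by case: ifP => // _; rewrite addr0 (le_trans _ (yw1 i)) ?lerDl.
  - by apply: le_trans (marginal2_ge j m S Fmono Fsub F0); rewrite lerN2.
rewrite multilinear_telescope -addrA lerD2l.
apply: le_trans (ler_sum _ (fun m _ => ler_wpM2l (w0 m) (marg_ge m))).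
under [leRHS]eq_bigr do rewrite mulrBr mulrCA.
rewrite sumrB -mulr_sumr lerD2l lerN2 mulrAC -mulrA ler_wpM2l // ler_pdivlMr // mulrC.
exact: sum_prefix_mul_le.
Qed.

End Submodular.

Section Vectors.
Variables (R : realType) (n : nat).
Implicit Types (a b u v : 'I_n -> R).

Lemma normv_sqr a : normv a ^+ 2 = \sum_i a i ^+ 2.
Proof. by rewrite sqr_sqrtr // sumr_ge0 // => i _; apply: sqr_ge0. Qed.

Lemma normv_ge0 a : 0 <= normv a.
Proof. exact: sqrtr_ge0. Qed.

Lemma normv_sqr_le a (D : R) : normv a <= D -> normv a ^+ 2 <= D ^+ 2.
Proof. by move=> aD; rewrite !expr2 ler_pM ?normv_ge0. Qed.

Lemma dotv_ge_young a b (beta : R) : 0 < beta ->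
  - (beta / 2 * normv b ^+ 2) - (2 * beta)^-1 * normv a ^+ 2 <= dotv a b.
Proof.
move=> beta0; rewrite !normv_sqr !mulr_sumr -sumrN -sumrB; apply: ler_sum => i _.
rewrite -subr_ge0.
have -> : a i * b i - (- (beta / 2 * b i ^+ 2) - (2 * beta)^-1 * a i ^+ 2) =
          (beta * b i + a i) ^+ 2 / (2 * beta) by field; rewrite gt_eqF.
by rewrite divr_ge0 ?sqr_ge0 // mulr_ge0 // ltW.
Qed.

Lemma normvB_sqr_le u v (D : R) : normv u <= D -> normv v <= D ->
  normv (fun i => v i - u i) ^+ 2 <= 4 * D ^+ 2.
Proof.
move=> /normv_sqr_le uD /normv_sqr_le vD.
apply: le_trans (_ : 2 * normv v ^+ 2 + 2 * normv u ^+ 2 <= _); last by lra.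
rewrite !normv_sqr !mulr_sumr -big_split; apply: ler_sum => i _ /=.
rewrite -subr_ge0 (_ : _ - _ = (v i + u i) ^+ 2) ?sqr_ge0 //; ring.
Qed.

End Vectors.

Section Step.
Variables (R : realType) (n : nat).
Local Notation ML := (@multilinear R n).

Lemma multilinear_step F (c r D T beta : R) (y v u d : 'I_n -> R) :
  monotone_sf F -> submodular F -> nonneg_sf F -> 0 <= c -> (forall m, F [set m] <= c) ->
  0 < T -> 0 < beta ->
  (forall i, 0 <= y i <= 1) -> (forall i, 0 <= v i) -> (forall i, y i + v i / T <= 1) ->
  (forall i, 0 <= u i <= 1) ->
  (\sum_i v i) ^+ 2 <= r * D ^+ 2 -> normv v <= D -> normv u <= D -> dotv d u <= dotv d v ->
  ML F y + T^-1 * (ML F u - ML F y) - c * r * D ^+ 2 / (2 * T ^+ 2)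
   - (2 * T)^-1 * (4 * beta * D ^+ 2
                   + beta^-1 * normv (fun i => ML (marginal i F) y - d i) ^+ 2)
   <= ML F (fun i => y i + v i / T).
Proof.
move=> Fmono Fsub F0 c0 Fc T0 beta0 y01 v0 yv1 u01 vs vD uD duv.
set g := fun i => ML (marginal i F) y; set N := normv _ ^+ 2.
have smooth := @multilinear_smooth _ _ F y (fun i => v i / T) c Fmono Fsub F0 c0 Fc
  (fun i => proj1 (andP (y01 i))) (fun i => divr_ge0 (v0 i) (ltW T0)) yv1.
have gv : \sum_m v m / T * ML (marginal m F) y = T^-1 * dotv g v.
  by rewrite /dotv mulr_sumr; apply: eq_bigr => m _; rewrite /g; ring.
have curv : c / 2 * (\sum_m v m / T) ^+ 2 <= c * r * D ^+ 2 / (2 * T ^+ 2).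
  rewrite -mulr_suml (_ : c / 2 * _ = c * (\sum_i v i) ^+ 2 / (2 * T ^+ 2)).
    by rewrite -[c * r * _]mulrA ler_pM2r ?invr_gt0 ?mulr_gt0 ?exprn_gt0 // ler_wpM2l.
  by field; rewrite gt_eqF.
have concave : ML F u - ML F y <= dotv g u.
  rewrite /dotv (eq_bigr (fun m => u m * g m)) => [|m _]; last by rewrite mulrC.
  exact: multilinear_concave_dir.
have gap : dotv g v = dotv g u + (dotv d v - dotv d u)
                      + dotv (fun i => g i - d i) (fun i => v i - u i).
  by rewrite /dotv -!sumrB -!big_split; apply: eq_bigr => i _ /=; ring.
have young := dotv_ge_young (fun i => g i - d i) (fun i => v i - u i) beta0.
have uvD := normvB_sqr_le uD vD.
have Q_le : ML F u - ML F y - 2 * beta * D ^+ 2 - (2 * beta)^-1 * N <= dotv g v.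
  have : beta / 2 * normv (fun i => v i - u i) ^+ 2 <= beta / 2 * (4 * D ^+ 2).
    by rewrite ler_wpM2l // divr_ge0 // ltW.
  rewrite -/N in young; lra.
have Tinv0 : 0 <= T^-1 by rewrite invr_ge0 ltW.
rewrite gv in smooth; have := ler_wpM2l Tinv0 Q_le.
have -> : T^-1 * (ML F u - ML F y - 2 * beta * D ^+ 2 - (2 * beta)^-1 * N) =
  T^-1 * (ML F u - ML F y) - (2 * T)^-1 * (4 * beta * D ^+ 2 + beta^-1 * N).
  by field; rewrite !gt_eqF.
lra.
Qed.

End Step.

Section MatroidPolytope.
Variables (R : realType) (n : nat) (I : {set {set 'I_n}}).
Local Notation C := (@matroid_polytope R n I).
Implicit Types (v : 'I_n -> R) (S : {set 'I_n}).

Lemma matroid_polytope_in01 v : C v -> forall i, 0 <= v i <= 1.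
Proof.
case=> lam [lam0 _ lam1 ->] i; apply/andP; split.
  by apply: sumr_ge0 => S _; apply: mulr_ge0 => //; rewrite /Defs.indic; case: ifP.
by rewrite -lam1; apply: ler_sum => S _; rewrite /Defs.indic; case: ifP; rewrite ?mulr1 ?mulr0.
Qed.

Lemma sum_indic S : \sum_i Defs.indic R S i = #|S|%:R.
Proof. by rewrite -big_mkcond /= sumr_const. Qed.

Lemma matroid_polytope_sum_le v (M : R) : C v ->
  (forall S, S \in I -> #|S|%:R <= M) -> \sum_i v i <= M.
Proof.
case=> lam [lam0 _ lam1 ->] IM; rewrite exchange_big /=.
under eq_bigr do rewrite -mulr_sumr sum_indic.
apply: le_trans (_ : \sum_(S in I) lam S * M <= M).
  by apply: ler_sum => S SI; rewrite ler_wpM2l ?IM.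
by rewrite -mulr_suml lam1 mul1r.
Qed.

Lemma matroid_polytope_indic S : S \in I -> C (Defs.indic R S).
Proof.
move=> SI; exists (fun S' => (S' == S)%:R); split.
- by move=> S'; case: eqP.
- by move=> S' S'I; case: eqP => // eS; rewrite eS SI in S'I.
- by rewrite (bigD1 S) //= eqxx big1 ?addr0 // => S' /andP[_ /negbTE ->].
- apply/funext => i; rewrite (bigD1 S) //= eqxx mul1r big1 ?addr0 //.
  by move=> S' /andP[_ /negbTE ->]; rewrite mul0r.
Qed.

Lemma card_le_sqr_of_normv_le (D : R) S : (forall v, C v -> normv v <= D) ->
  S \in I -> #|S|%:R <= D ^+ 2.
Proof.
move=> CD SI; have := normv_sqr_le (CD _ (matroid_polytope_indic SI)).
rewrite normv_sqr -sum_indic (eq_bigr (Defs.indic R S)) // => i _.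
by rewrite /Defs.indic; case: ifP; rewrite ?expr1n ?expr0n.
Qed.

Lemma matroid_polytope_sum_sqr_le v (D : R) : C v -> (forall v, C v -> normv v <= D) ->
  (\sum_i v i) ^+ 2 <= (mrank I)%:R * D ^+ 2.
Proof.
move=> Cv CD.
have v0 : 0 <= \sum_i v i.
  by apply: sumr_ge0 => i _; case/andP: (matroid_polytope_in01 Cv i).
rewrite expr2 ler_pM //.
- apply: matroid_polytope_sum_le => // S SI.
  by rewrite ler_nat; apply: leq_bigmax_cond.
- apply: matroid_polytope_sum_le => // S; exact: card_le_sqr_of_normv_le.
Qed.

End MatroidPolytope.

Lemma multilinear_step_matroid (R : realType) n (I : {set {set 'I_n}}) F (D T beta : R)
    (y v u d : 'I_n -> R) :
  monotone_sf F -> submodular F -> nonneg_sf F -> 0 < T -> 0 < beta ->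
  (forall x, matroid_polytope I x -> normv x <= D) ->
  matroid_polytope I v -> matroid_polytope I u -> dotv d u <= dotv d v ->
  (forall i, 0 <= y i <= 1) -> (forall i, y i + v i / T <= 1) ->
  multilinear F y + T^-1 * (multilinear F u - multilinear F y)
   - \big[Num.max/0]_(i < n) F [set i] * (mrank I)%:R * D ^+ 2 / (2 * T ^+ 2)
   - (2 * T)^-1 * (4 * beta * D ^+ 2
                   + beta^-1 * normv (fun i => multilinear (marginal i F) y - d i) ^+ 2)
   <= multilinear F (fun i => y i + v i / T).
Proof.
move=> Fmono Fsub F0 T0 beta0 CD Cv Cu duv y01 yv1.
apply: multilinear_step => // [||i|i|||].
- exact: bigmax_ge_id.
- by move=> m; apply: (le_bigmax 0 (fun i => F [set i]) m).
- by case/andP: (matroid_polytope_in01 Cv i).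
- exact: matroid_polytope_in01 Cu i.
- exact: matroid_polytope_sum_sqr_le.
- exact: CD.
- exact: CD.
Qed.

Section Expectation.
Variables (R : realType) (n : nat) (dz : measure_display) (Z : measurableType dz)
  (P : probability Z R) (f : Z -> {set 'I_n} -> R).
Hypothesis f_int : forall S, P.-integrable setT (fun z => (f z S)%:E).
Local Notation F := (fexp P f).

Lemma fexpE S : (\int[P]_z (f z S)%:E)%E = (F S)%:E.
Proof. by rewrite /fexp fineK // integrable_fin_num. Qed.

Lemma Gexp_multilinear : Gexp P f = multilinear F.
Proof.
apply/funext => y; rewrite /Gexp /multilinear.
under eq_integral do rewrite /multilinear -sumEFin.
rewrite integral_sum //= => [|S]; last first.
  under eq_fun do rewrite -mulrA mulrC EFinM.
  exact: integrableZl.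
rewrite (eq_bigr (fun S => (F S * \prod_(i in S) y i * \prod_(i in ~: S) (1 - y i))%:E)).
  by rewrite sumEFin.
move=> S _; under eq_integral do rewrite -mulrA mulrC EFinM.
by rewrite integralZl // fexpE -EFinM mulrC mulrA.
Qed.

Lemma fexp_nonneg : (forall z, nonneg_sf (f z)) -> nonneg_sf F.
Proof.
by move=> f0 S; apply/fine_ge0/integral_ge0 => z _; rewrite lee_fin; apply: f0.
Qed.

Lemma fexp_monotone : (forall z, monotone_sf (f z)) -> monotone_sf F.
Proof.
move=> fmono A B AB; rewrite -lee_fin -!fexpE.
by apply: (le_integral measurableT (f_int A) (f_int B)) => z _; rewrite lee_fin fmono.
Qed.

Lemma fexp_submodular : (forall z, submodular (f z)) -> submodular F.
Proof.
move=> fsub A B; rewrite -lee_fin !EFinD -!fexpE.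
have fD S1 S2 := integrableD measurableT (f_int S1) (f_int S2).
rewrite -!integralD_EFin //; [|exact: f_int..].
apply: (le_integral measurableT (fD _ _) (fD _ _)) => z _.
by rewrite /= -!EFinD lee_fin fsub.
Qed.

End Expectation.

Section Integration.
Variables (R : realType) (d : measure_display) (Om : measurableType d)
  (Pr : probability Om R).

Lemma measurable_multilinear n (F : {set 'I_n} -> R) (y : Om -> 'I_n -> R) :
  (forall i, measurable_fun setT (fun w => y w i)) ->
  measurable_fun setT (fun w => multilinear F (y w)).
Proof.
have prod_in (S : {set 'I_n}) (h : 'I_n -> Om -> R) :
    (forall i, measurable_fun setT (h i)) ->
    measurable_fun setT (fun w => \prod_(i in S) h i w).
  move=> mh; under eq_fun do rewrite big_mkcond /=.
  by apply: measurable_prod => i _; case: (i \in S) => //; apply: measurable_cst.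
move=> my; apply: measurable_sum => S; apply: measurable_funM; first apply: measurable_funM.
- exact: measurable_cst.
- exact: prod_in.
- by apply: prod_in => i; apply: measurable_funB.
Qed.

Lemma le_integral_nonmeasurable (m g : Om -> R) : (forall w, 0 <= g w) ->
  (forall w, m w <= g w) -> (\int[Pr]_w (m w)%:E <= \int[Pr]_w (g w)%:E)%E.
Proof.
move=> g0 mg; rewrite [X in (X <= _)%E]integralE.
apply: (@le_trans _ _ (\int[Pr]_w ((fun w => (m w)%:E)^\+ w))%E).
  rewrite -[leRHS]sube0 leeB // integral_ge0 // => w _; exact: funeneg_ge0.
rewrite !ge0_integralTE => [|w|w]; last exact: funepos_ge0.
- apply: le_ereal_sup => _ [h hm <-]; exists h => // w.
  by apply: le_trans (hm w) _; rewrite funeposE ge_max !lee_fin g0 mg.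
- by rewrite lee_fin.
Qed.

Lemma integral_affine2 (a b : Om -> R) (al be ga : R) :
  Pr.-integrable setT (EFin \o a) -> Pr.-integrable setT (EFin \o b) ->
  (\int[Pr]_w ((al * a w + be * b w + ga)%:E) =
  (al * fine (\int[Pr]_w (a w)%:E) + be * fine (\int[Pr]_w (b w)%:E) + ga)%:E)%E.
Proof.
move=> ia ib.
have ic := finite_measure_integrable_cst Pr ga measurableT.
have ia' := integrableZl measurableT al ia; have ib' := integrableZl measurableT be ib.
under eq_integral do rewrite !EFinD !EFinM.
rewrite integralD // ?integrableD // integralD // !integralZl // integral_cst //.
rewrite [X in (_ + X)%E](_ : _ = ga%:E) ?EFinD ?EFinM ?fineK ?integrable_fin_num //.
by transitivity (ga%:E * 1)%E; [congr (_ * _)%E; apply: probability_setT | rewrite mule1].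
Qed.

Lemma integral_step_lower (a b N : Om -> R) (Gs K C T beta : R) :
  0 < T -> 0 < beta ->
  Pr.-integrable setT (EFin \o a) -> Pr.-integrable setT (EFin \o b) ->
  (forall w, 0 <= N w) ->
  (forall w, b w + T^-1 * (Gs - b w) - K - (2 * T)^-1 * (C + beta^-1 * N w) <= a w) ->
  (\int[Pr]_w (a w)%:E >= \int[Pr]_w (b w)%:E + (T^-1)%:E * \int[Pr]_w ((Gs - b w)%:E)
     - K%:E - ((2 * T)^-1)%:E * (C%:E + (beta^-1)%:E * \int[Pr]_w (N w)%:E))%E.
Proof.
move=> T0 beta0 ia ib N0 step.
set IA := fine (\int[Pr]_w (a w)%:E); set IB := fine (\int[Pr]_w (b w)%:E).
have eA : (\int[Pr]_w (a w)%:E)%E = IA%:E by rewrite fineK ?integrable_fin_num.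
have eB : (\int[Pr]_w (b w)%:E)%E = IB%:E by rewrite fineK ?integrable_fin_num.
have eC : (\int[Pr]_w ((Gs - b w)%:E))%E = (Gs - IB)%:E.
  rewrite (_ : Gs - IB = -1 * IB + 0 * IA + Gs); last by ring.
  by rewrite -integral_affine2 //; apply: eq_integral => w _; congr EFin; ring.
set k := 2 * T * beta.
have k0 : 0 < k by rewrite !mulr_gt0.
set X := IB + T^-1 * (Gs - IB) - K - (2 * T)^-1 * C - IA.
have kX_le : ((k * X)%:E <= \int[Pr]_w (N w)%:E)%E.
  have -> : k * X = - k * IA + k * (1 - T^-1) * IB + k * (T^-1 * Gs - K - (2 * T)^-1 * C).
    by rewrite /X; ring.
  rewrite -integral_affine2 //; apply: le_integral_nonmeasurable => // w.
  rewrite -subr_ge0 (_ : _ - _ = k * (a w - (b w + T^-1 * (Gs - b w) - K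
                                  - (2 * T)^-1 * (C + beta^-1 * N w)))).
    by rewrite mulr_ge0 ?subr_ge0 // ltW.
  by rewrite /k; field; rewrite !gt_eqF.
have IN0 : (0 <= \int[Pr]_w (N w)%:E)%E by apply: integral_ge0 => w _; rewrite lee_fin.
rewrite eA eB eC; move: kX_le IN0.
case: (\int[Pr]_w (N w)%:E)%E => [XN | |] // kX_le _.
  rewrite -!EFinM -!EFinD !lee_fin in kX_le *.
  rewrite -subr_ge0 (_ : _ - _ = k^-1 * (XN - k * X)) ?mulr_ge0 ?subr_ge0 //.
    by rewrite invr_ge0 ltW.
  by rewrite /X /k; field; rewrite !gt_eqF.
rewrite gt0_muley ?lte_fin ?invr_gt0 // addey // gt0_muley ?lte_fin ?invr_gt0 ?mulr_gt0 //.
by rewrite addeNy leNye.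
Qed.

Lemma integrable_multilinear n (F : {set 'I_n} -> R) (y : Om -> 'I_n -> R) :
  nonneg_sf F -> monotone_sf F -> (forall i, measurable_fun setT (fun w => y w i)) ->
  (forall w i, 0 <= y w i <= 1) ->
  Pr.-integrable setT (EFin \o (fun w => multilinear F (y w))).
Proof.
move=> F0 Fmono my y01; apply: measurable_bounded_integrable => //.
- exact: le_lt_trans (probability_le1 Pr measurableT) (ltry 1).
- exact: measurable_multilinear.
exists (F [set: 'I_n]); split; first exact: num_real.
move=> M FM w _ /=; rewrite ger0_norm ?multilinear_ge0 //.
rewrite (le_trans _ (ltW FM)) // -[leRHS](multilinear_cst _ (y w)).
by apply: ler_multilinear => // S; apply/Fmono/finset.subsetT.
Qed.

End Integration.

Section Iterates.
Variables (R : realType) (n : nat) (d : measure_display) (Om : measurableType d).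
Variables (T : nat) (v : nat -> Om -> 'I_n -> R).
Local Notation y := (scg_y T v).

Lemma scg_yS t w : (0 < t)%N -> y t.+1 w = (fun i => y t w i + v t w i / T%:R).
Proof. by case: t. Qed.

Lemma measurable_scg_y : (forall t i, measurable_fun setT (fun w => v t w i)) ->
  forall t i, measurable_fun setT (fun w => y t w i).
Proof.
move=> mv [|t]; first by move=> i; apply: measurable_cst.
elim: t => [|t IH] i; first exact: measurable_cst.
under eq_fun do rewrite scg_yS //.
by apply: measurable_funD => //; apply: measurable_funM.
Qed.

Lemma scg_y_bound : (0 < T)%N ->
  (forall t w i, (1 <= t <= T)%N -> 0 <= v t w i <= 1) ->
  forall t w i, (1 <= t <= T.+1)%N -> 0 <= y t w i <= t.-1%:R / T%:R.
Proof.
move=> T0 v01; elim=> [//|[|t] IH] w i ht; first by rewrite mul0r lexx.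
have [/andP[y0 yt] /andP[v0 v1]] : (0 <= y t.+1 w i <= t%:R / T%:R) /\ (0 <= v t.+1 w i <= 1).
  by case/andP: ht => _ ht; split; [apply: IH; rewrite /= ltnW | apply: v01].
rewrite scg_yS // addr_ge0 ?divr_ge0 //= -natr1 mulrDl lerD //.
by rewrite ler_pM2r // invr_gt0 ltr0n.
Qed.

Lemma scg_y_in01 : (0 < T)%N ->
  (forall t w i, (1 <= t <= T)%N -> 0 <= v t w i <= 1) ->
  forall t w i, (1 <= t <= T.+1)%N -> 0 <= y t w i <= 1.
Proof.
move=> T0 v01 t w i ht; have /andP[-> /le_trans->] // := scg_y_bound T0 v01 w i ht.
by rewrite ler_pdivrMr ?ltr0n // mul1r ler_nat; case/andP: ht => _; case: t.
Qed.

End Iterates.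

Unset Implicit Arguments.

Theorem lemma3 (R : realType) (n : nat)
  (* the random index z ~ P *)
  (dz : measure_display) (Z : measurableType dz) (P : probability Z R)
  (* the functions f_z, z in Z *)
  (f : Z -> {set 'I_n} -> R)
  (hf_nonneg : forall z, nonneg_sf (f z))
  (hf_mono : forall z, monotone_sf (f z))
  (hf_sub : forall z, submodular (f z))
  (hf_meas : forall S, measurable_fun setT (fun z => f z S))
  (hf_int : forall S, P.-integrable setT (fun z => (f z S)%:E))
  (* the matroid and its polytope C *)
  (I : {set {set 'I_n}}) (hI : is_matroid I)
  (D : R) (hD : forall y, matroid_polytope I y -> normv y <= D)
  (ystar : 'I_n -> R) (hystar_in : matroid_polytope I ystar)
  (hystar_max : forall y, matroid_polytope I y -> Gexp P f y <= Gexp P f ystar)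
  (* the underlying probability space of the algorithm and samples z_1, z_2, ... *)
  (d : measure_display) (Om : measurableType d) (Pr : probability Om R)
  (z : nat -> Om -> Z)
  (hz_meas : forall t, measurable_fun setT (z t))
  (hz_law : forall t (A : set Z), measurable A -> Pr (z t @^-1` A)%classic = P A)
  (hz_indep : mutually_indep Pr z)
  (* horizon, step sizes, and the linear-maximization choices v_t *)
  (T : nat) (hT : (0 < T)%N)
  (rho : nat -> R) (hrho : forall t, 0 < rho t)
  (v : nat -> Om -> 'I_n -> R)
  (hv_meas : forall t i, measurable_fun setT (fun w => v t w i))
  (hv_argmax : forall t w, (1 <= t <= T)%N ->
     let dt := scg_d f z rho (scg_y T v) t w in
     matroid_polytope I (v t w) /\
     (forall u, matroid_polytope I u -> dotv dt u <= dotv dt (v t w)))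
  (t : nat) (ht : (1 <= t <= T)%N) (beta : R) (hbeta : 0 < beta) :
  let y := scg_y T v in
  let dd := scg_d f z rho y in
  let G := Gexp P f in
  let r := mrank I in
  let fmax := \big[Num.max/0]_(i < n) fexp P f [set i] in
  (\int[Pr]_w (G (y t.+1 w))%:E >=
     \int[Pr]_w (G (y t w))%:E
     + (T%:R^-1)%:E * \int[Pr]_w ((G ystar - G (y t w))%:E)
     - (fmax * r%:R * D ^+ 2 / (2 * T%:R ^+ 2))%:E
     - ((2 * T%:R)^-1)%:E *
         ((4 * beta * D ^+ 2)%:E
          + (beta^-1)%:E * \int[Pr]_w ((normv (fun i => gradv G (y t w) i - dd t w i)) ^+ 2)%:E))%E.
Proof.
cbv zeta; set y := scg_y T v; set G := Gexp P f; set F := fexp P f.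
have G_ML : G = multilinear F by apply: Gexp_multilinear.
have [Fmono Fsub F0] : [/\ monotone_sf F, submodular F & nonneg_sf F].
  by split; [apply: fexp_monotone | apply: fexp_submodular | apply: fexp_nonneg].
have vC s w : (1 <= s <= T)%N -> matroid_polytope I (v s w) by case/(hv_argmax s w).
have y01 := scg_y_in01 hT (fun s w i hs => matroid_polytope_in01 (vC s w hs) i).
have intG s : (1 <= s <= T.+1)%N -> Pr.-integrable setT (EFin \o (fun w => G (y s w))).
  move=> hs; rewrite G_ML; apply: integrable_multilinear => // [i|w i].
  - exact: measurable_scg_y.
  - exact: y01.
have [t1 tT] := andP ht.
apply: integral_step_lower => // [|||w|w]; first by rewrite ltr0n.
- by apply: intG; rewrite /= ltnS.
- by apply: intG; rewrite t1 leqW.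
- exact: sqr_ge0.
have [vCt vmax] := hv_argmax t w ht.
have yS : y t.+1 w = (fun i => y t w i + v t w i / T%:R) by apply: scg_yS.
have -> : (fun i => gradv G (y t w) i - scg_d f z rho y t w i) =
          (fun i => multilinear (marginal i F) (y t w) - scg_d f z rho y t w i).
  by apply/funext => i; rewrite G_ML gradv_multilinear.
rewrite G_ML yS; apply: multilinear_step_matroid => //; first by rewrite ltr0n.
- exact: vmax.
- by move=> i; apply: y01; rewrite t1 leqW.
- by move=> i; have /andP[_] := y01 t.+1 w i tT; rewrite -/y yS.
Qed.
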